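(* Let $$f(z)=\frac{1-z-z^2-\sqrt{5z^4+10z^3-z^2-6z+1}}{2-2z-2z^2},$$ where the square root is the formal power series with constant term $1$. Then for every positive integer $n$, the Riordan matrix $\left(\left(\frac{1}{1-z-z^2}\right)^n, f(z)\right)$ is a pseudo-involution.
   Context: A Riordan matrix is a pair $(g(z),f(z))$ of formal power series over $\mathbb{C}$ with $g(z)=\sum_{n\ge 0} g_n z^n$, $g_0\neq 0$, and $f(z)=\sum_{n\ge 1} f_n z^n$ with $f_1\neq 0$; it represents the infinite lower-triangular matrix whose $k$-th column ($k\ge 0$) has generating function $g(z)f(z)^k$. Riordan matrices form a group under matrix multiplication, where $(g(z),f(z))*(h(z),l(z))=(g(z)h(f(z)),\,l(f(z)))$ and the identity is $(1,z)$. Let $M=(1,-z)$. A Riordan matrix $L$ is called a pseudo-involution if $(L*M)*(L*M)=(1,z)$. *)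

From HB Require Import structures.
From mathcomp Require Import all_boot all_order all_algebra.
Set Implicit Arguments.
Unset Strict Implicit.
Unset Printing Implicit Defensive.
Import GRing.Theory Num.Theory.
Local Open Scope ring_scope.

Definition fps (C : Type) := nat -> C.

Section FPS.
Variable C : fieldType.

Definition fps_poly (s : seq C) : fps C := fun n => nth 0 s n.

Definition fps_one : fps C := fps_poly [:: 1].
Definition fps_z : fps C := fps_poly [:: 0; 1].

Definition fps_add (a b : fps C) : fps C := fun n => a n + b n.
Definition fps_opp (a : fps C) : fps C := fun n => - a n.

Definition fps_mul (a b : fps C) : fps C :=
  fun n => \sum_(i < n.+1) a i * b (n - i)%N.

Fixpoint fps_exp (a : fps C) (k : nat) : fps C :=
  if k is k'.+1 then fps_mul a (fps_exp a k') else fps_one.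

(* composition g(f(z)), meaningful when f 0 = 0 (then only k <= n contribute) *)
Definition fps_comp (g f : fps C) : fps C :=
  fun n => \sum_(k < n.+1) g k * fps_exp f k n.

(* multiplicative inverse of a series with a 0 != 0:
   b_0 = a_0^-1,  b_n = - a_0^-1 * sum_{j=1}^n a_j b_{n-j};
   fps_inv_seq a n = [:: b_0; ...; b_n] *)
Fixpoint fps_inv_seq (a : fps C) (n : nat) : seq C :=
  if n is n'.+1 then
    let s := fps_inv_seq a n' in
    rcons s (- (a 0%N)^-1 * \sum_(i < n) a i.+1 * nth 0 s (n' - i)%N)
  else [:: (a 0%N)^-1].

Definition fps_inv (a : fps C) : fps C := fun n => nth 0 (fps_inv_seq a n) n.

(* square root with constant term 1 of a series p with p 0 = 1:
   s_0 = 1,  2 s_n = p_n - sum_{i=1}^{n-1} s_i s_{n-i};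
   fps_sqrt1_seq p n = [:: s_0; ...; s_n] *)
Fixpoint fps_sqrt1_seq (p : fps C) (n : nat) : seq C :=
  if n is n'.+1 then
    let s := fps_sqrt1_seq p n' in
    rcons s ((p n - \sum_(1 <= i < n) nth 0 s i * nth 0 s (n - i)%N) / 2)
  else [:: 1].

Definition fps_sqrt1 (p : fps C) : fps C := fun n => nth 0 (fps_sqrt1_seq p n) n.

Definition is_riordan (g f : fps C) : Prop :=
  g 0%N != 0 /\ f 0%N = 0 /\ f 1%N != 0.

Definition riordan_mul (L M : fps C * fps C) : fps C * fps C :=
  (fps_mul L.1 (fps_comp M.1 L.2), fps_comp M.2 L.2).

Definition riordan_M : fps C * fps C := (fps_one, fps_opp fps_z).

Definition riordan_eq (L M : fps C * fps C) : Prop :=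
  (forall n, L.1 n = M.1 n) /\ (forall n, L.2 n = M.2 n).

Definition pseudo_involution (g f : fps C) : Prop :=
  is_riordan g f /\
  let LM := riordan_mul (g, f) riordan_M in
  riordan_eq (riordan_mul LM LM) (fps_one, fps_z).

End FPS.

(* The series f is the root with f(0) = 0 of the quadratic
   equation  q (f^2 - f) = -(z + z^2).  Substituting z := -f into this
   equation, and using that it also gives q * q(-f) = 1, one finds that
   Y = f(-f) satisfies  Y^2 - Y = z + z^2, i.e. (Y + z)(Y - z - 1) = 0; the
   second factor is invertible, so f(-f) = -z.  Since q(-f) = 1/q, also
   g(-f) = 1/g for g = q^-n.  These two identities are exactly the
   statement that (g, f) * M is an involution. *)

From HB Require Import structures.
From mathcomp Require Import all_boot all_order all_algebra.
From mathcomp Require boolp.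
From mathcomp Require Import zify ring.
Set Implicit Arguments.
Unset Strict Implicit.
Unset Printing Implicit Defensive.
Import GRing.Theory Num.Theory.
Local Open Scope ring_scope.

Section Truncation.
Variable C : fieldType.
Implicit Types (a b : fps C) (p r : {poly C}).

(* [approx N a p]: the series a and the polynomial p agree below degree N.
   Every ring identity on series is checked on such truncations. *)
Definition approx (N : nat) a p := forall i, (i < N)%N -> a i = p`_i.

Definition trunc a N : {poly C} := \poly_(i < N) a i.

Lemma approx_trunc a N : approx N a (trunc a N).
Proof. by move=> i hi; rewrite coef_poly hi. Qed.

Lemma approxD a b p r N : approx N a p -> approx N b r ->
  approx N (fps_add a b) (p + r).
Proof. by move=> ha hb i hi; rewrite coefD /fps_add ha ?hb. Qed.

Lemma approxN a p N : approx N a p -> approx N (fps_opp a) (- p).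
Proof. by move=> ha i hi; rewrite coefN /fps_opp ha. Qed.

(* Coefficients below N of a Cauchy product only use coefficients below N. *)
Lemma approxM a b p r N : approx N a p -> approx N b r ->
  approx N (fps_mul a b) (p * r).
Proof.
move=> ha hb i hi; rewrite coefM /fps_mul; apply: eq_bigr => j _.
by have hj := ltn_ord j; rewrite ha ?hb //; lia.
Qed.

Lemma approx_poly s N : approx N (fps_poly s) (Poly s).
Proof. by move=> i _; rewrite coef_Poly. Qed.

Lemma approx_polyE s p N : Poly s = p -> approx N (fps_poly s) p.
Proof. by move=> <-; apply: approx_poly. Qed.

Lemma approx_one N : approx N (fps_one C) 1.
Proof. by move=> [|[|i]] _; rewrite coef1 //= nth_nil. Qed.

Lemma approx_z N : approx N (fps_z C) 'X.
Proof. by rewrite -[X in approx _ _ X]polyseqK polyseqX; apply: approx_poly. Qed.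

Lemma approxX a p N k : approx N a p -> approx N (fps_exp a k) (p ^+ k).
Proof.
move=> ha; elim: k => [|k IH] /=; first by rewrite expr0; apply: approx_one.
by rewrite exprS; apply: approxM.
Qed.

Lemma fps_ext a b : (forall N, exists2 p, approx N a p & approx N b p) -> a = b.
Proof.
move=> h; apply: boolp.funext => i; have [p ha hb] := h i.+1.
by rewrite ha ?hb.
Qed.

End Truncation.

Section SeriesRing.
Variable C : fieldType.
Implicit Types a b c : fps C.

Definition fps_zero : fps C := fun _ => 0.

Lemma fps_addA : associative (@fps_add C).
Proof. by move=> a b c; apply: boolp.funext => i; apply: addrA. Qed.

Lemma fps_addC : commutative (@fps_add C).
Proof. by move=> a b; apply: boolp.funext => i; apply: addrC. Qed.

Lemma fps_add0 : left_id fps_zero (@fps_add C).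
Proof. by move=> a; apply: boolp.funext => i; apply: add0r. Qed.

Lemma fps_addN : left_inverse fps_zero (@fps_opp C) (@fps_add C).
Proof. by move=> a; apply: boolp.funext => i; apply: addNr. Qed.

Ltac approx_tr := repeat first
  [ apply: approxM | apply: approxD | apply: approx_one | apply: approx_trunc ].

Lemma fps_mulA : associative (@fps_mul C).
Proof.
move=> a b c; apply: fps_ext => N.
exists (trunc a N * (trunc b N * trunc c N)); first by approx_tr.
by rewrite mulrA; approx_tr.
Qed.

Lemma fps_mulC : commutative (@fps_mul C).
Proof.
move=> a b; apply: fps_ext => N.
exists (trunc a N * trunc b N); first by approx_tr.
by rewrite mulrC; approx_tr.
Qed.

Lemma fps_mul1 : left_id (fps_one C) (@fps_mul C).
Proof.
move=> a; apply: fps_ext => N.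
exists (1 * trunc a N); first by approx_tr.
by rewrite mul1r; approx_tr.
Qed.

Lemma fps_mulDl : left_distributive (@fps_mul C) (@fps_add C).
Proof.
move=> a b c; apply: fps_ext => N.
exists ((trunc a N + trunc b N) * trunc c N); first by approx_tr.
by rewrite mulrDl; approx_tr.
Qed.

HB.instance Definition _ := boolp.gen_eqMixin (fps C).
HB.instance Definition _ := boolp.gen_choiceMixin (fps C).

Lemma fps_one_neq0 : fps_one C != fps_zero.
Proof.
by apply/eqP => /(congr1 (fun a => a 0%N)) /eqP; rewrite /= oner_eq0.
Qed.

HB.instance Definition _ :=
  GRing.isZmodule.Build (fps C) fps_addA fps_addC fps_add0 fps_addN.
HB.instance Definition _ := GRing.Zmodule_isComNzRing.Build (fps C)
  fps_mulA fps_mulC fps_mul1 fps_mulDl fps_one_neq0.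

Lemma fps_mulE a b : fps_mul a b = a * b. Proof. by []. Qed.
Lemma fps_addE a b : fps_add a b = a + b. Proof. by []. Qed.
Lemma fps_oppE a : fps_opp a = - a. Proof. by []. Qed.
Lemma fps_oneE : fps_one C = 1. Proof. by []. Qed.
Lemma fps_expE a k : fps_exp a k = a ^+ k.
Proof. by elim: k => [|k IH] //=; rewrite exprS IH. Qed.

Lemma approx_exp a p N k : approx N a p -> approx N (a ^+ k) (p ^+ k).
Proof. by rewrite -fps_expE; apply: approxX. Qed.

Lemma coef0D a b : (a + b) 0%N = a 0%N + b 0%N. Proof. by []. Qed.
Lemma coef0N a : (- a) 0%N = - a 0%N. Proof. by []. Qed.
Lemma coef0M a b : (a * b) 0%N = a 0%N * b 0%N.
Proof. by rewrite -fps_mulE /fps_mul big_ord1. Qed.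
Lemma coef0X a k : (a ^+ k) 0%N = a 0%N ^+ k.
Proof. by elim: k => [|k IH]; rewrite ?expr0 // !exprS coef0M IH. Qed.
Lemma coef_one m : (1 : fps C) m = (m == 0%N)%:R.
Proof. by case: m => [|[|m]] //=; rewrite nth_nil. Qed.

End SeriesRing.

Section Composition.
Variable C : fieldType.
Implicit Types (g h : fps C) (p r : {poly C}).

Lemma sum_ord_extend (F : nat -> C) n m : (n <= m)%N ->
  (forall k, (n <= k < m)%N -> F k = 0) -> \sum_(k < n) F k = \sum_(k < m) F k.
Proof.
move=> nm h; rewrite -!(big_mkord xpredT) (big_cat_nat (leq0n n) nm) /=.
by rewrite [X in _ + X]big1_seq ?addr0 // => k; rewrite mem_index_iota => /andP[_ /h].
Qed.

Lemma coef_exp_low r k i : r`_0 = 0 -> (i < k)%N -> (r ^+ k)`_i = 0.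
Proof.
move=> r0 ik; have -> : r = drop_poly 1 r * 'X.
  rewrite -{1}(poly_take_drop 1 r) [take_poly 1 r](_ : _ = 0) ?add0r ?expr1 //.
  by apply/polyP => -[|j]; rewrite coef_take_poly coef0.
by rewrite exprMn coefMXn ik.
Qed.

Lemma approx_comp g f p r N : approx N g p -> approx N f r -> r`_0 = 0 ->
  approx N (fps_comp g f) (p \Po r).
Proof.
move=> hg hf r0 i hi; rewrite /fps_comp comp_polyE coef_sum.
pose F k := p`_k * (r ^+ k)`_i.
transitivity (\sum_(k < i.+1) F k).
  apply: eq_bigr => k _; have hk := ltn_ord k.
  by rewrite /F hg; [rewrite (approxX k hf) | lia].
rewrite (@sum_ord_extend F i.+1 (i.+1 + size p)) => [||k /andP[hk _]]; last 2 first.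
- lia.
- by rewrite /F coef_exp_low ?mulr0.
under [RHS]eq_bigr do rewrite coefZ.
symmetry; apply: (@sum_ord_extend F) => [|k /andP[hk _]]; first lia.
by rewrite /F nth_default ?mul0r.
Qed.

Variable f : fps C.
Hypothesis f0 : f 0%N = 0.

Lemma trunc_coef0 N : (trunc f N)`_0 = 0.
Proof. by rewrite coef_poly; case: N. Qed.

Ltac approx_comp_tr := repeat first
  [ apply: approx_comp | apply: approxM | apply: approxD | apply: approxN
  | apply: approx_one | apply: approx_z | apply: approx_trunc
  | apply: trunc_coef0 ].

Lemma compD g h : fps_comp (g + h) f = fps_comp g f + fps_comp h f.
Proof.
apply: fps_ext => N; exists ((trunc g N + trunc h N) \Po trunc f N).
  by approx_comp_tr.
by rewrite comp_polyD; approx_comp_tr.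
Qed.

Lemma compM g h : fps_comp (g * h) f = fps_comp g f * fps_comp h f.
Proof.
apply: fps_ext => N; exists ((trunc g N * trunc h N) \Po trunc f N).
  by approx_comp_tr.
by rewrite comp_polyM; approx_comp_tr.
Qed.

Lemma compN g : fps_comp (- g) f = - fps_comp g f.
Proof.
apply: fps_ext => N; exists (- trunc g N \Po trunc f N).
  by approx_comp_tr.
by rewrite -[X in X \Po _]sub0r comp_polyB comp_poly0 sub0r; approx_comp_tr.
Qed.

Lemma comp1 : fps_comp 1 f = 1.
Proof.
apply: fps_ext => N; exists (1 \Po trunc f N); first by approx_comp_tr.
by rewrite comp_polyC; apply: approx_one.
Qed.

Lemma compz : fps_comp (fps_z C) f = f.
Proof.
apply: fps_ext => N; exists ('X \Po trunc f N); first by approx_comp_tr.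
by rewrite comp_polyX; apply: approx_trunc.
Qed.

Lemma compX g k : fps_comp (g ^+ k) f = fps_comp g f ^+ k.
Proof. by elim: k => [|k IH]; rewrite ?expr0 ?comp1 // !exprS compM IH. Qed.

Lemma comp_coef0 g : fps_comp g f 0%N = g 0%N.
Proof. by rewrite /fps_comp big_ord1 /= mulr1. Qed.

End Composition.

Section InverseAndRoot.
Variable C : fieldType.
Implicit Types a p u x : fps C.

Lemma inv_seq_size a m : size (fps_inv_seq a m) = m.+1.
Proof. by elim: m => [|m IH] //=; rewrite size_rcons IH. Qed.

Lemma inv_seq_nth a m i : (i <= m)%N -> nth 0 (fps_inv_seq a m) i = fps_inv a i.
Proof.
elim: m i => [|m IH] i hi; first by move: hi; rewrite leqn0 => /eqP ->.
have [lt_im|le_mi] := ltnP i m.+1; first by rewrite /= nth_rcons inv_seq_size lt_im IH.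
by have -> : i = m.+1 by lia.
Qed.

Lemma inv_rec a m : fps_inv a m.+1 =
  - (a 0%N)^-1 * \sum_(i < m.+1) a i.+1 * fps_inv a (m - i)%N.
Proof.
rewrite {1}/fps_inv /= nth_rcons inv_seq_size ltnn eqxx; congr (_ * _).
by apply: eq_bigr => i _; rewrite inv_seq_nth ?leq_subr.
Qed.

Lemma fps_invP a : a 0%N != 0 -> a * fps_inv a = 1.
Proof.
move=> a0; apply: boolp.funext => -[|m].
  by rewrite -fps_mulE /fps_mul big_ord1 /fps_inv /= mulfV.
rewrite -fps_mulE /fps_mul big_ord_recl subn0 coef_one.
under eq_bigr do rewrite subSS.
by rewrite inv_rec mulrA mulrN mulfV // mulN1r addNr.
Qed.

Lemma fps_unit_cancel u x : u 0%N != 0 -> u * x = 0 -> x = 0.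
Proof.
move=> u0 ux0; have -> : x = fps_inv u * (u * x).
  by rewrite mulrA [fps_inv u * u]mulrC fps_invP // mul1r.
by rewrite ux0 mulr0.
Qed.

Lemma sqrt_seq_size p m : size (fps_sqrt1_seq p m) = m.+1.
Proof. by elim: m => [|m IH] //=; rewrite size_rcons IH. Qed.

Lemma sqrt_seq_nth p m i : (i <= m)%N -> nth 0 (fps_sqrt1_seq p m) i = fps_sqrt1 p i.
Proof.
elim: m i => [|m IH] i hi; first by move: hi; rewrite leqn0 => /eqP ->.
have [lt_im|le_mi] := ltnP i m.+1; first by rewrite /= nth_rcons sqrt_seq_size lt_im IH.
by have -> : i = m.+1 by lia.
Qed.

Lemma sqrt_rec p m : fps_sqrt1 p m.+1 =
  (p m.+1 - \sum_(i < m) fps_sqrt1 p i.+1 * fps_sqrt1 p (m - i)%N) / 2.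
Proof.
rewrite {1}/fps_sqrt1 /= nth_rcons sqrt_seq_size ltnn eqxx; congr ((_ - _) / _).
rewrite (big_addn 0 m.+1 1) subn1 /= big_mkord.
by apply: eq_bigr => i _; rewrite addn1 subSS !sqrt_seq_nth // ?leq_subr //; lia.
Qed.

Lemma fps_sqrtP p : p 0%N = 1 -> (2 : C) != 0 -> fps_sqrt1 p * fps_sqrt1 p = p.
Proof.
move=> p0 two_neq0; apply: boolp.funext => -[|m].
  by rewrite -fps_mulE /fps_mul big_ord1 /fps_sqrt1 /= mulr1 p0.
rewrite -fps_mulE /fps_mul big_ord_recl subn0.
under eq_bigr do rewrite subSS.
rewrite big_ord_recr /= subnn.
have s0 : fps_sqrt1 p 0 = 1 by [].
rewrite s0 mul1r mulr1 addrCA -mulr2n (sqrt_rec p m) mulr2n.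
by field.
Qed.

End InverseAndRoot.

Section PseudoInvolution.
Variable C : fieldType.
Local Notation z := (fps_z C).

(* Since (g, f) * M = (g, -f), the matrix (g, f) is a pseudo-involution
   exactly when g * g(-f) = 1 and f(-f) = -z. *)
Lemma pseudo_involutionP (g f : fps C) : is_riordan g f ->
  g * fps_comp g (- f) = 1 -> fps_comp f (- f) = - z ->
  pseudo_involution g f.
Proof.
move=> riordan_gf g_inv f_inv; split=> //.
have f0 : f 0%N = 0 by case: riordan_gf => _ [].
have nf0 : (- f) 0%N = 0 by rewrite coef0N f0 oppr0.
have LM : riordan_mul (g, f) (riordan_M C) = (g, - f).
  by rewrite /riordan_mul /= fps_oneE comp1 // fps_mulE mulr1 fps_oppE compN ?compz.
by rewrite LM /riordan_mul /= fps_mulE g_inv compN // f_inv opprK.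
Qed.

End PseudoInvolution.

Section QuadraticEquation.
Variable C : fieldType.
Local Notation z := (fps_z C).

Variables q f : fps C.
Hypothesis q_def : q = 1 - z - z ^+ 2.
Hypothesis f0 : f 0%N = 0.
Hypothesis f_eq : q * (f * f - f) = - (z + z * z).

Let nf0 : (- f) 0%N = 0.
Proof. by rewrite coef0N f0 oppr0. Qed.

Lemma q_coef0 : q 0%N = 1.
Proof. by rewrite q_def !(coef0D, coef0N) coef0X /= expr0n /= !subr0. Qed.

(* q(-f) = 1 - (-f) - f^2 is the inverse of q, by the equation. *)
Lemma comp_q_neg : q * fps_comp q (- f) = 1.
Proof.
have -> : fps_comp q (- f) = 1 + f - f ^+ 2.
  by rewrite q_def !(compD nf0, compN nf0) compX // comp1 // compz //; ring.
have -> : q * (1 + f - f ^+ 2) = q - q * (f * f - f) by ring.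
by rewrite f_eq q_def; ring.
Qed.

(* Y = f(-f) solves Y^2 - Y = z + z^2; the root with Y(0) = 0 is -z. *)
Lemma comp_f_neg : fps_comp f (- f) = - z.
Proof.
set Y := fps_comp f (- f).
have Y0 : Y 0%N = 0 by rewrite /Y comp_coef0.
have eq_at_negf : fps_comp q (- f) * (Y * Y - Y) = f - f * f.
  have := congr1 (fun a => fps_comp a (- f)) f_eq.
  rewrite /= !(compD nf0, compM nf0, compN nf0) compz // => ->; ring.
have Y_eq : Y * Y - Y - (z + z * z) = 0.
  rewrite -[Y * Y - Y]mul1r -comp_q_neg -mulrA eq_at_negf.
  have -> : q * (f - f * f) = - (q * (f * f - f)) by ring.
  by rewrite f_eq; ring.
have Yz : Y + z = 0.
  apply: (@fps_unit_cancel _ (Y - z - 1)); last by rewrite -Y_eq; ring.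
  by rewrite !(coef0D, coef0N) Y0 /= subr0 sub0r oppr_eq0 oner_eq0.
by apply/eqP; rewrite -addr_eq0 Yz.
Qed.

Lemma comp_inv_pow_neg n :
  fps_inv q ^+ n * fps_comp (fps_inv q ^+ n) (- f) = 1.
Proof.
have iq : q * fps_inv q = 1 by apply: fps_invP; rewrite q_coef0 oner_neq0.
have iq_neg : fps_inv q * fps_comp (fps_inv q) (- f) = 1.
  transitivity ((q * fps_inv q) * fps_comp (fps_inv q * q) (- f)).
    by rewrite (compM nf0) -[LHS]mulr1 -comp_q_neg; ring.
  by rewrite [fps_inv q * q]mulrC iq (comp1 nf0) mulr1.
by rewrite (compX nf0) -exprMn iq_neg expr1n.
Qed.

End QuadraticEquation.

Section TheSeries.
Variable C : fieldType.
Hypothesis two_neq0 : (2 : C) != 0.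
Local Notation z := (fps_z C).

Let q : fps C := fps_poly [:: 1; -1; -1].
Let P : fps C := fps_poly [:: 1; -6; -1; 10; 5].
Let f : fps C := fps_mul (fps_add q (fps_opp (fps_sqrt1 P)))
                         (fps_inv (fps_poly [:: 2; -2; -2])).

Ltac poly_ident := apply: fps_ext => N; eexists; last first;
  [ repeat first [ apply: approxD | apply: approxM | apply: approxN
                 | apply: approx_exp | apply: approx_one | apply: approx_z
                 | apply: approx_poly ]
  | apply: approx_polyE; rewrite /Poly /= ?cons_poly_def; ring ].

Lemma q_poly : q = 1 - z - z ^+ 2.
Proof. by poly_ident. Qed.

Lemma denominator_poly : fps_poly [:: 2; -2; -2] = q + q.
Proof. by poly_ident. Qed.

Lemma discriminant_poly : P = q * q - (z + z * z) * q * ((1 + 1) * (1 + 1)).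
Proof. by rewrite [in RHS]q_poly; poly_ident. Qed.

Let one_plus_one_neq0 : (1 + 1 : C) != 0.
Proof. by rewrite -mulr2n. Qed.

Lemma sqrtP_eq : fps_sqrt1 P = q - f * (q + q).
Proof.
have did : (q + q) * fps_inv (q + q) = 1.
  by apply: fps_invP; rewrite coef0D.
rewrite /f fps_mulE fps_addE fps_oppE denominator_poly -mulrA.
by rewrite [fps_inv _ * _]mulrC did mulr1; ring.
Qed.

Lemma f_coef0 : f 0%N = 0.
Proof. by rewrite /f fps_mulE fps_addE fps_oppE coef0M coef0D coef0N subrr mul0r. Qed.

(* f solves the quadratic equation: squaring q - 2 q f = sqrt P. *)
Lemma f_quadratic : q * (f * f - f) = - (z + z * z).
Proof.
have sq : fps_sqrt1 P * fps_sqrt1 P = P by apply: fps_sqrtP.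
apply/eqP; rewrite -subr_eq0 opprK; apply/eqP.
apply: (@fps_unit_cancel _ ((1 + 1) * (1 + 1) * q)).
  by rewrite !coef0M !coef0D mulr1 mulf_neq0.
transitivity (fps_sqrt1 P * fps_sqrt1 P - P); last by rewrite sq subrr.
by rewrite sqrtP_eq [in RHS]discriminant_poly; ring.
Qed.

(* [z^1] f = ([z^1] q - [z^1] sqrt P) / 2 = (-1 + 3) / 2 = 1. *)
Lemma f_coef1 : f 1%N = 1.
Proof.
have s1 : fps_sqrt1 P 1%N = -6 / 2 by rewrite (sqrt_rec P 0) big_ord0 subr0.
have s0 : fps_sqrt1 P 0%N = 1 by [].
rewrite /f /fps_mul big_ord_recr big_ord1 /= /fps_add /fps_opp s0 s1 /q /=.
by rewrite subrr mul0r add0r subnn /fps_inv /=; field.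
Qed.

Lemma riordan_q_f n : is_riordan (fps_exp (fps_inv q) n) f.
Proof.
split; last by rewrite f_coef0 f_coef1 oner_neq0.
by rewrite fps_expE coef0X /fps_inv /= invr1 expr1n oner_neq0.
Qed.

End TheSeries.

Unset Implicit Arguments.

Theorem mainTheorem12 (C : numClosedFieldType) (n : nat) (hn : (0 < n)%N) :
  let q : fps C := fps_poly [:: 1; -1; -1] in                 (* 1 - z - z^2 *)
  let P : fps C := fps_poly [:: 1; -6; -1; 10; 5] in          (* 5z^4+10z^3-z^2-6z+1 *)
  let f : fps C :=
    fps_mul (fps_add q (fps_opp (fps_sqrt1 P)))
            (fps_inv (fps_poly [:: 2; -2; -2])) in             (* (q - sqrt P)/(2-2z-2z^2) *)
  pseudo_involution (fps_exp (fps_inv q) n) f.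
Proof.
move=> q P f.
have two_neq0 : (2 : C) != 0 by rewrite pnatr_eq0.
apply: pseudo_involutionP; first exact: riordan_q_f.
- by rewrite fps_expE; apply: comp_inv_pow_neg;
    [exact: q_poly | exact: f_coef0 | exact: f_quadratic].
- by apply: comp_f_neg; [exact: q_poly | exact: f_coef0 | exact: f_quadratic].
Qed.
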